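(* Let $U$ be a countably infinite universe, $\mathcal{C}=(L_1,L_2,\ldots)$ a countably infinite collection of languages over $U$, let $m^\star_n(L_i)$ be computed by the Noisy Procedure in the context, and fix a non-decreasing $f:\mathbb{N}\to\mathbb{N}$ with $\lim_{t\to\infty}f(t)=\infty$. Then the Noisy Algorithm in the context (with this $f$) noisily non-uniformly generates from $\mathcal{C}$ with generation times $t^\star_n(L_i)=\max(g(n,i),m^\star_n(L_i)+1)$, where $g(n,i)$ is the smallest $j$ with $f(j)\ge p(n,i)$ and $p(n,i)$ is the position of the pair $(n,i)$ in the diagonal order; that is, for every $n\ge0$, every $i\ge1$, every enumeration of $L_i$ at noise level $n$, and every $t$ with $|S_t|\ge t^\star_n(L_i)$, the output $z_t$ belongs to $L_i\setminus S_t$.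
   Context: A language is an infinite subset of $U$; a collection is a sequence of languages (repetitions allowed, entries distinguished by index). For a language $L$ and integer $n\ge0$, an enumeration of $L$ at noise level $n$ is a sequence $x_1,x_2,\ldots$ of elements of $U$ such that every $x\in L$ equals some $x_t$ and $\sum_{t\ge1}\mathbf{1}[x_t\notin L]\le n$. A generating algorithm at each time $t\ge1$ receives $x_1,\ldots,x_t$ and outputs $z_t\in U$; $S_t$ is the set of distinct strings among $x_1,\ldots,x_t$. For a set $T$, a language $L$ and integer $a\ge0$, $T$ is $a$-contained in $L$ if $\sum_{x\in T}\mathbf{1}[x\notin L]\le a$. An algorithm noisily non-uniformly generates from $\mathcal{C}$ with generation times $t_n(L_i)$ if for all $n\ge0$, $i\ge1$ and every enumeration of $L_i$ at noise level $n$, $z_t\in L_i\setminus S_t$ whenever $|S_t|\ge t_n(L_i)$. Diagonal order: the pairs $(n,i)$, $n\ge0$, $i\ge1$, are ordered as $(0,1),(1,1),(0,2),(2,1),(1,2),(0,3),(3,1),\ldots$, i.e. for $n'=0,1,2,\ldots$ and $h=0,\ldots,n'$ the pair $(n'-h,h+1)$. For each pair $(a,b)$ there is an entry $L_{a,b}$, a copy of $L_b$ labelled by $(a,b)$. Noisy Procedure. Set $\mathcal{C}'_0=()$. For $l=1,2,\ldots$, let $(n,i)$ be the $l$-th pair in diagonal order; append the entry $L_{n,i}$ to the end of $\mathcal{C}'_{l-1}$ to get $\mathcal{C}'_l=(L'_1,\ldots,L'_l)$ and set $j=l$. Repeat: (A) let $T$ be a finite subset of $U$ of largest size for which there exists a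 subcollection $\mathcal{D}$ of the entries $(L'_1,\ldots,L'_j)$ with: $\mathcal{D}$ includes $L'_j$; for every entry $L_{a,b}\in\mathcal{D}$, $T$ is $a$-contained in $L_b$; and $\bigcap_{L_{a,b}\in\mathcal{D}}L_b$ is finite; let $\mathcal{C}_{\mathrm{chk}}$ be such a $\mathcal{D}$ and $m_{\mathrm{chk}}=|T|$ (with $m_{\mathrm{chk}}=0$ if no such $\mathcal{D}$ exists). (B) If $j\le1$, or $m_{\mathrm{chk}}>m^\star_a(L_b)$ where $L'_{j-1}=L_{a,b}$, stop. (C) Otherwise swap positions $j-1$ and $j$ in $\mathcal{C}'_l$, set $j\leftarrow j-1$, return to (A). When the loop stops, set $T(L_{n,i})=T$, $\mathcal{C}(L_{n,i})=\mathcal{C}_{\mathrm{chk}}$, $m^\star_n(L_i)=m_{\mathrm{chk}}$. Noisy Algorithm (parameter $f$). At time $t$, run the first $f(t)$ steps of the Noisy Procedure to get $\mathcal{C}'_{f(t)}=(L'_1,\ldots,L'_{f(t)})$. Initialize $I_t=()$; for $j=1,\ldots,f(t)$ in order, writing $L'_j=L_{a,b}$: if $S_t$ is $a$-contained in $L_b$ and $|\bigcap_{L\in I_t\cup\{L_b\}}L|=\infty$, append $L_b$ to $I_t$. If $I_t$ is empty output an arbitrary string of $U\setminus S_t$; otherwise output a string of $(\bigcap_{L\in I_t}L)\setminus S_t$. *)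

From Stdlib Require Import ClassicalEpsilon.
From mathcomp Require Import all_boot.
From mathcomp Require Import boolp.

Set Implicit Arguments.
Unset Strict Implicit.
Unset Printing Implicit Defensive.

Section NoisyDefs.

Variable U : countType.

Definition finU (A : U -> Prop) : Prop := exists s : seq U, forall x, A x -> x \in s.

(* T (a finite set, given as a duplicate-free list) is a-contained in L. *)
Definition acontained (T : seq U) (L : U -> Prop) (a : nat) : bool :=
  count (fun x => ~~ `[< L x >]) T <= a.

Definition pairs_upto (N : nat) : seq (nat * nat) :=
  flatten [seq [seq (n' - h, h.+1) | h <- iota 0 n'.+1] | n' <- iota 0 N].

Definition diag_pair (l : nat) : nat * nat := nth (0, 1) (pairs_upto l) l.-1.

Definition diag_pos (n i : nat) : nat := (index (n, i) (pairs_upto (n + i))).+1.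

Variable L : nat -> U -> Prop.   (* the collection; L_i for i >= 1 *)

(* An entry L_{a,b} is represented by its label (a,b); a collection of
   entries C' = (L'_1, ..., L'_l) by the list of labels.  The entry at
   1-based position k of C is nth (0,0) C k.-1. *)
Definition entry (C : seq (nat * nat)) (k : nat) : nat * nat := nth (0, 0) C k.-1.

Definition inter_pos (C : seq (nat * nat)) (D : seq nat) : U -> Prop :=
  fun x => forall k, k \in D -> L (entry C k).2 x.

(* m is the size of some T as in step (A), for some admissible D among the
   entries L'_1, ..., L'_j (subcollections given by sets of positions). *)
Definition chk_size (C : seq (nat * nat)) (j m : nat) : Prop :=
  exists D : seq nat,
    [/\ all (fun k => 0 < k <= j) D, j \in D,
        finU (inter_pos C D) &
        exists T : seq U, [/\ uniq T, size T = m &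
          forall k, k \in D -> acontained T (L (entry C k).2) (entry C k).1]].

Definition mchk (C : seq (nat * nat)) (j : nat) : nat :=
  epsilon (inhabits 0%N) (fun m =>
    (chk_size C j m /\ forall m', chk_size C j m' -> m' <= m) \/
    ((forall m', ~ chk_size C j m') /\ m = 0)).

(* swap 1-based positions j-1 and j *)
Definition swap_prev (C : seq (nat * nat)) (j : nat) : seq (nat * nat) :=
  take (j - 2) C ++ [:: entry C j; entry C j.-1] ++ drop j C.

Fixpoint proc_loop (fuel : nat) (ms : nat * nat -> nat)
    (C : seq (nat * nat)) (j : nat) : seq (nat * nat) * nat :=
  let mc := mchk C j in
  match fuel with
  | 0 => (C, mc)
  | fuel'.+1 =>
      if (j <= 1) || (ms (entry C j.-1) < mc) then (C, mc)
      else proc_loop fuel' ms (swap_prev C j) j.-1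
  end.

(* State after l steps: the collection C'_l and the values m*_a(L_b) of
   all inserted entries (a,b) (0 for entries not yet inserted). *)
Fixpoint proc_state (l : nat) : seq (nat * nat) * (nat * nat -> nat) :=
  match l with
  | 0 => ([::], fun _ => 0)
  | l'.+1 =>
      let s := proc_state l' in
      let q := diag_pair l in
      let r := proc_loop l s.2 (rcons s.1 q) l in
      (r.1, fun e => if e == q then r.2 else s.2 e)
  end.

(* m*_n(L_i), fixed at the step where L_{n,i} is inserted *)
Definition mstar (n i : nat) : nat := (proc_state (diag_pos n i)).2 (n, i).

(* x_1, x_2, ... is given as x : nat -> U (x 0 unused). *)
Definition enumeration (A : U -> Prop) (n : nat) (x : nat -> U) : Prop :=
  (forall y, A y -> exists t, 0 < t /\ x t = y) /\
  (forall N, count (fun t => ~~ `[< A (x t) >]) (iota 1 N) <= n).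

Definition S_t (x : nat -> U) (t : nat) : seq U := undup [seq x k | k <- iota 1 t].

Definition inter_idx (I : seq nat) : U -> Prop := fun y => forall b, b \in I -> L b y.

Definition I_step (S : seq U) (I : seq nat) (e : nat * nat) : seq nat :=
  if `[< acontained S (L e.2) e.1 /\ ~ finU (inter_idx (rcons I e.2)) >]
  then rcons I e.2 else I.

Definition I_t (f : nat -> nat) (x : nat -> U) (t : nat) : seq nat :=
  foldl (I_step (S_t x t)) [::] (proc_state (f t)).1.

Definition alg_output (f : nat -> nat) (x : nat -> U) (t : nat) (z : U) : Prop :=
  if I_t f x t is [::] then z \notin S_t x t
  else inter_idx (I_t f x t) z /\ z \notin S_t x t.

End NoisyDefs.

(* The Noisy Procedure maintains the invariant that every entry L_{a,b} of
   C'_l bounds, by m*_a(L_b), the size of every check (step (A)) made at its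
   current position.  Appending the new entry does not change the checks at
   earlier positions; the new entry is swapped past an entry E only when the
   check at its position is at most m*(E), which is what keeps the bound of E
   valid at E's new position; and where the loop stops, m* of the new entry is
   the largest check there.

   At time t, |S_t| >= g(n,i) forces f(t) >= p(n,i), so L_{n,i} is among the
   entries scanned by the algorithm.  The languages selected before it have an
   infinite intersection and S_t is a-contained in each of them; if adding L_i
   made the intersection finite, S_t would witness a check of size
   |S_t| > m*_n(L_i) at the position of L_{n,i}.  So L_i is selected, and the
   output lies in L_i \ S_t. *)

From Stdlib Require Import ClassicalEpsilon.
From mathcomp Require Import all_boot.
From mathcomp Require Import boolp.
From mathcomp Require Import zify.

Set Implicit Arguments.
Unset Strict Implicit.
Unset Printing Implicit Defensive.

Definition diagonal (n' : nat) : seq (nat * nat) :=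
  [seq (n' - h, h.+1) | h <- iota 0 n'.+1].

Lemma pairs_uptoS N : pairs_upto N.+1 = pairs_upto N ++ diagonal N.
Proof. by rewrite /pairs_upto -addn1 iotaD map_cat flatten_cat /= cats0. Qed.

Lemma prefix_pairs_upto N M : N <= M -> prefix (pairs_upto N) (pairs_upto M).
Proof.
move=> /subnK <-; elim: (M - N) => [|k IH]; first exact: prefix_refl.
by rewrite addSn pairs_uptoS; apply: prefix_catl.
Qed.

Lemma size_pairs_upto N : N <= size (pairs_upto N).
Proof.
by elim: N => // N IH; rewrite pairs_uptoS size_cat size_map size_iota; lia.
Qed.

Lemma mem_pairs_upto N a b : (a, b) \in pairs_upto N -> 0 < b /\ a + b <= N.
Proof.
elim: N => // N IH; rewrite pairs_uptoS mem_cat => /orP [/IH|]; first lia.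
by case/mapP => h; rewrite mem_iota => /andP [_ lt_h] [-> ->]; lia.
Qed.

Lemma uniq_pairs_upto N : uniq (pairs_upto N).
Proof.
elim: N => // N IH; rewrite pairs_uptoS cat_uniq IH andTb; apply/andP; split.
  apply/hasPn => -[a b] /mapP [h]; rewrite mem_iota => /andP [_ lt_h] [-> ->].
  by apply/negP => /mem_pairs_upto; lia.
by rewrite map_inj_in_uniq ?iota_uniq // => h1 h2 _ _ [_ ->].
Qed.

Lemma mem_pairs_upto_diagonal n i : 0 < i -> (n, i) \in pairs_upto (n + i).
Proof.
move=> i_gt0; rewrite -(prednK (ltn_addl n i_gt0)) pairs_uptoS mem_cat.
apply/orP; right; apply/mapP; exists i.-1; first by rewrite mem_iota; lia.
by congr pair; lia.
Qed.

Lemma diag_pairE l M : 0 < l <= M -> diag_pair l = nth (0, 1) (pairs_upto M) l.-1.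
Proof.
move=> /andP [l_gt0 le_lM]; have /prefixP [r ->] := prefix_pairs_upto le_lM.
by rewrite nth_cat (leq_trans _ (size_pairs_upto l)) //; lia.
Qed.

Lemma diag_pairK n i : 0 < i -> diag_pair (diag_pos n i) = (n, i).
Proof.
move=> i_gt0; have ni_mem := mem_pairs_upto_diagonal n i_gt0.
rewrite (@diag_pairE _ (diag_pos n i + (n + i))) ?leq_addr //.
have /prefixP [r ->] := prefix_pairs_upto (leq_addl (diag_pos n i) (n + i)).
by rewrite nth_cat index_mem ni_mem nth_index.
Qed.

Lemma diag_pair_inj l1 l2 : 0 < l1 -> 0 < l2 -> diag_pair l1 = diag_pair l2 -> l1 = l2.
Proof.
move=> l1_gt0 l2_gt0.
rewrite !(@diag_pairE _ (maxn l1 l2)) ?leq_maxl ?leq_maxr ?l1_gt0 ?l2_gt0 //.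
move/eqP; rewrite nth_uniq ?uniq_pairs_upto // => [/eqP||]; first lia.
all: by apply: leq_trans (size_pairs_upto _); lia.
Qed.

Lemma count_le_sum_cover (X : eqType) (I : finType) (P : pred I) (p : pred X)
    (q : I -> pred X) (s : seq X) :
  {in s, forall x, p x -> exists2 k, P k & q k x} ->
  count p s <= \sum_(k | P k) count (q k) s.
Proof.
elim: s => [|x s IH] cover_s /=; first by rewrite big1.
rewrite big_split /= leq_add //; last first.
  by apply: IH => y s_y; apply: cover_s; rewrite inE s_y orbT.
case p_x: (p x) => //; have [k P_k q_kx] := cover_s x (mem_head _ _) p_x.
by rewrite (bigD1 k) //= q_kx.
Qed.

Section CheckSizes.

Context {U : countType} (L : nat -> U -> Prop).

Lemma finU_sub (A B : U -> Prop) : finU A -> (forall x, B x -> A x) -> finU B.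
Proof. by move=> [s A_s] BA; exists s => x /BA /A_s. Qed.

Definition chk_witness C j D m :=
  [/\ all (fun k => 0 < k <= j) D, j \in D, finU (inter_pos L C D) &
      exists T : seq U, [/\ uniq T, size T = m &
        forall k, k \in D -> acontained T (L (entry C k).2) (entry C k).1]].

Lemma chk_size_relabel C C' j j' D m (sg : nat -> nat) :
  chk_witness C' j D m ->
  {in D, forall d, entry C' d = entry C (sg d)} ->
  {in D, forall d, 0 < sg d <= j'} -> j' \in map sg D -> chk_size L C j' m.
Proof.
move=> [_ _ D_fin [T [T_uniq T_size T_acont]]] entry_sg sg_range j'_sgD.
exists (map sg D); split => //.
- by apply/allP => _ /mapP [d D_d ->]; exact: sg_range.
- apply: finU_sub D_fin _ => y y_inter k D_k; rewrite entry_sg //.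
  by apply: y_inter; exact: map_f.
- exists T; split => // _ /mapP [d D_d ->]; rewrite -entry_sg //; exact: T_acont.
Qed.

(* The bound sums, over all sets A of positions, the size of a finite cover of
   the intersection of the languages at A (junk when that intersection is
   infinite), plus all the noise levels. *)
Lemma chk_size_bounded C j : exists B, forall m, chk_size L C j m -> m <= B.
Proof.
pose inter (A : {set 'I_j.+1}) x := forall k : 'I_j.+1, k \in A -> L (entry C k).2 x.
pose covers A (s : seq U) := forall x, inter A x -> x \in s.
pose cover A := epsilon (inhabits [::]) (covers A).
exists (\sum_A size (cover A) + \sum_(k < j.+1) (entry C k).1).
move=> m [D [D_range _ D_fin [T [T_uniq <- T_acont]]]].
pose A := [set k : 'I_j.+1 | val k \in D].
have inter_A x : inter A x -> inter_pos L C D x.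
  move=> x_A k D_k; have /andP [_ le_kj] := allP D_range k D_k.
  by apply: (x_A (Ordinal (le_kj : k < j.+1))); rewrite inE.
have cover_A x : inter A x -> x \in cover A.
  apply: (epsilon_spec (inhabits [::]) (covers A)).
  by have [s s_cover] := finU_sub D_fin inter_A; exists s.
rewrite -(count_predC (mem (cover A)) T) leq_add //.
  apply: (@leq_trans (size (cover A))); last by rewrite (bigD1 A) //= leq_addr.
  rewrite -size_filter uniq_leq_size ?filter_uniq // => y.
  by rewrite mem_filter => /andP [].
apply: leq_trans
  (_ : \sum_(k | k \in A) count (fun x => ~~ `[< L (entry C k).2 x >]) T <= _).
  apply: count_le_sum_cover => x _ /= x_notin.
  have /existsNP [k /not_implyP [A_k not_L]] : ~ inter A x.
    by move=> /cover_A; rewrite (negbTE x_notin).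
  by exists k => //; apply/asboolPn.
apply: leq_trans (_ : \sum_(k | k \in A) (entry C k).1 <= _).
  by apply: leq_sum => k; rewrite inE => D_k; exact: T_acont.
by rewrite [leqRHS](bigID (mem A)) leq_addr.
Qed.

Lemma chk_size_le_mchk C j m : chk_size L C j m -> m <= mchk L C j.
Proof.
move=> chk_m; have [B chk_le_B] := chk_size_bounded C j.
have [M chk_M M_max] :
    exists2 M, chk_size L C j M & forall m', chk_size L C j m' -> m' <= M.
  have ex_chk : exists m, `[< chk_size L C j m >] by exists m; exact: asboolT.
  case: (ex_maxnP ex_chk (fun m' chk_m' => chk_le_B m' (asboolW chk_m'))).
  by move=> M /asboolW chk_M M_max; exists M => // m' /asboolT /M_max.
rewrite /mchk; set P := (fun m0 => _ \/ _).
have : P (epsilon (inhabits 0) P) by apply: epsilon_spec; exists M; left.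
by case=> [[_ /(_ m chk_m)] | [no_chk _]] //; case: (no_chk m).
Qed.

End CheckSizes.

Definition swap_pos (j d : nat) : nat :=
  if d == j then j.-1 else if d == j.-1 then j else d.

Lemma swap_posP j d :
  [\/ d = j /\ swap_pos j d = j.-1,
      d <> j /\ d = j.-1 /\ swap_pos j d = j
    | d <> j /\ d <> j.-1 /\ swap_pos j d = d].
Proof.
rewrite /swap_pos; have [-> | d_j] := eqVneq d j; first by constructor 1.
have [d_j1 | d_j1] := eqVneq d j.-1; [constructor 2 | constructor 3].
  by split; [apply/eqP |].
by split; [apply/eqP | split; [apply/eqP |]].
Qed.

Lemma entry_swap_prev C j d : 1 < j <= size C -> 0 < d ->
  entry (swap_prev C j) d = entry C (swap_pos j d).
Proof.
move=> j_range d_gt0.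
have size_prefix : size (take (j - 2) C) = j - 2.
  by rewrite size_takel // (leq_trans (leq_subr 2 j)) //; case/andP: j_range.
rewrite /entry /swap_prev /swap_pos nth_cat size_prefix.
have [-> | d_j] := eqVneq d j.
  rewrite ifF; last lia.
  by rewrite (_ : j.-1 - (j - 2) = 1); last lia.
have [-> | d_j1] := eqVneq d j.-1.
  rewrite ifF; last lia.
  by rewrite (_ : j.-2 - (j - 2) = 0); last lia.
case: ifP => lt_d; first by rewrite nth_take.
by rewrite (_ : d.-1 - (j - 2) = (d.-1 - j).+2) /= ?nth_drop; [congr nth|]; lia.
Qed.

Lemma size_swap_prev C j : 1 < j <= size C -> size (swap_prev C j) = size C.
Proof.
by move=> j_range; rewrite /swap_prev !size_cat size_take size_drop /=; case: ifP; lia.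
Qed.

Lemma perm_swap_prev C j : 1 < j <= size C -> perm_eq (swap_prev C j) C.
Proof.
move=> j_range; rewrite /swap_prev /entry.
rewrite -[X in perm_eq _ X](cat_take_drop (j - 2) C) perm_cat2l.
rewrite (@drop_nth _ (0, 0) (j - 2)); last lia.
rewrite (@drop_nth _ (0, 0) (j - 2).+1); last lia.
rewrite (_ : j.-1 = (j - 2).+1); last lia.
rewrite (_ : (j - 2).+2 = j); last lia.
by apply/permP => p /=; rewrite addnCA.
Qed.

Section Procedure.

Context {U : countType} (L : nat -> U -> Prop).

Definition settled (ms : nat * nat -> nat) C k :=
  forall m, chk_size L C k m -> m <= ms (entry C k).

Definition loop_inv ms q C j :=
  [/\ 0 < j <= size C, entry C j = q &
      forall k, 0 < k <= size C -> k != j -> settled ms C k].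

Lemma chk_size_swap_prev_other C j k m :
  1 < j <= size C -> 0 < k -> k != j -> k != j.-1 ->
  chk_size L (swap_prev C j) k m -> chk_size L C k m.
Proof.
move=> j_range k_gt0 k_j k_j1 [D wD]; have [D_range k_D _ _] := wD.
apply: (chk_size_relabel wD (sg := swap_pos j)).
- by move=> d /(allP D_range) /andP [d_gt0 _]; exact: entry_swap_prev.
- by move=> d /(allP D_range); case: (swap_posP j d); lia.
- by apply/mapP; exists k; rewrite // /swap_pos (negbTE k_j) (negbTE k_j1).
Qed.

Lemma chk_size_swap_prev_at C j m : 1 < j <= size C ->
  chk_size L (swap_prev C j) j m -> chk_size L C j m \/ chk_size L C j.-1 m.
Proof.
move=> j_range [D wD]; have [D_range j_D _ _] := wD.
have entry_D : {in D, forall d, entry (swap_prev C j) d = entry C (swap_pos j d)}.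
  by move=> d /(allP D_range) /andP [d_gt0 _]; exact: entry_swap_prev.
case: (boolP (j.-1 \in D)) => j1_D; [left | right];
  apply: (chk_size_relabel wD entry_D).
- by move=> d /(allP D_range); case: (swap_posP j d); lia.
- by apply/mapP; exists j.-1; rewrite // /swap_pos ifF ?eqxx //; lia.
- move=> d d_D; have d_j1 : d != j.-1 by apply: contraNneq j1_D => <-.
  by move: (allP D_range d d_D) d_j1; case: (swap_posP j d); lia.
- by apply/mapP; exists j; rewrite // /swap_pos eqxx.
Qed.

(* The swap condition is what keeps the entry moved from j-1 to j settled. *)
Lemma loop_inv_swap_prev ms q C j : loop_inv ms q C j -> 1 < j ->
  mchk L C j <= ms (entry C j.-1) -> loop_inv ms q (swap_prev C j) j.-1.
Proof.
move=> [j_range C_j settled_C] j_gt1 le_mchk.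
have j_range' : 1 < j <= size C by lia.
have entry_swap k : 0 < k -> entry (swap_prev C j) k = entry C (swap_pos j k).
  exact: entry_swap_prev.
split; rewrite ?size_swap_prev //; first lia.
  have swap_j1 : swap_pos j j.-1 = j by case: (swap_posP j j.-1); lia.
  by rewrite entry_swap ?swap_j1 //; lia.
move=> k k_range k_j1 m; rewrite entry_swap; last lia.
have [-> | k_j] := eqVneq k j.
  rewrite /swap_pos eqxx => /(chk_size_swap_prev_at j_range') [].
    by move=> /chk_size_le_mchk le_m; exact: leq_trans le_m le_mchk.
  by apply: settled_C; [lia | rewrite neq_ltn; lia].
rewrite /swap_pos (negbTE k_j) (negbTE k_j1) => chk_m.
by apply: settled_C (chk_size_swap_prev_other _ _ _ _ chk_m); lia.
Qed.

Lemma proc_loop_spec fuel ms q C j : loop_inv ms q C j ->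
  exists C' j', [/\ proc_loop L fuel ms C j = (C', mchk L C' j'),
                    loop_inv ms q C' j' & perm_eq C' C].
Proof.
elim: fuel C j => [|fuel IH] C j inv_C /=; first by exists C, j.
case: ifP => [_|/norP [j_gt1 le_mchk]]; first by exists C, j.
rewrite -ltnNge in j_gt1; rewrite -leqNgt in le_mchk.
have [j_range _ _] := inv_C.
have [C' [j' [-> inv_C' perm_C']]] := IH _ _ (loop_inv_swap_prev inv_C j_gt1 le_mchk).
exists C', j'; split => //; apply: perm_trans perm_C' (perm_swap_prev _); lia.
Qed.

Lemma loop_inv_rcons ms C q : (forall k, 0 < k <= size C -> settled ms C k) ->
  loop_inv ms q (rcons C q) (size C).+1.
Proof.
move=> settled_C; split; rewrite ?size_rcons ?leqnn //.
  by rewrite /entry /= nth_rcons ltnn eqxx.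
move=> k k_range k_last m [D wD]; have [D_range k_D _ _] := wD.
have entry_rcons d : 0 < d <= k -> entry (rcons C q) d = entry C d.
  by move=> d_range; rewrite /entry nth_rcons ifT //; lia.
rewrite entry_rcons; last lia.
apply: settled_C; first lia.
apply: (chk_size_relabel wD (sg := id)); rewrite ?map_id //.
  by move=> d /(allP D_range) /entry_rcons.
by move=> d /(allP D_range).
Qed.

Lemma loop_inv_settled ms q C j : loop_inv ms q C j -> uniq C ->
  forall k, 0 < k <= size C ->
    settled (fun e => if e == q then mchk L C j else ms e) C k.
Proof.
move=> [j_range C_j settled_C] C_uniq k k_range m; have [-> | k_j] := eqVneq k j.
  by rewrite C_j eqxx; exact: chk_size_le_mchk.
rewrite ifF; first exact: settled_C.
have [k_lt j_lt] : k.-1 < size C /\ j.-1 < size C by lia.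
by rewrite -C_j /entry nth_uniq //; apply/negbTE; lia.
Qed.

Lemma proc_stateS l : proc_state L l.+1 =
  let r := proc_loop L l.+1 (proc_state L l).2
             (rcons (proc_state L l).1 (diag_pair l.+1)) l.+1 in
  (r.1, fun e => if e == diag_pair l.+1 then r.2 else (proc_state L l).2 e).
Proof. by []. Qed.

Lemma proc_state_spec l :
  perm_eq (proc_state L l).1 (map diag_pair (iota 1 l)) /\
  forall k, 0 < k <= size (proc_state L l).1 ->
    settled (proc_state L l).2 (proc_state L l).1 k.
Proof.
elim: l => [|l [perm_l settled_l]]; first by split => // -[|k].
rewrite proc_stateS; move: perm_l settled_l.
set s := proc_state L l; set q := diag_pair l.+1 => perm_l settled_l.
have size_l : size s.1 = l by rewrite (perm_size perm_l) size_map size_iota.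
have q_notin : q \notin s.1.
  rewrite (perm_mem perm_l); apply/mapP => -[d]; rewrite mem_iota => d_range.
  by move/diag_pair_inj; lia.
have uniq_l : uniq s.1.
  rewrite (perm_uniq perm_l) map_inj_in_uniq ?iota_uniq // => a b.
  by rewrite !mem_iota => a_range b_range /diag_pair_inj; apply; lia.
have perm_q : perm_eq (rcons s.1 q) (map diag_pair (iota 1 l.+1)).
  by rewrite -[l.+1]addn1 iotaD map_cat add1n -cats1 perm_cat2r.
have := loop_inv_rcons q settled_l; rewrite size_l.
move=> /(proc_loop_spec l.+1) [C' [j' [-> inv_C' perm_C']]] /=.
split; first exact: perm_trans perm_C' perm_q.
move=> k k_range; apply: (loop_inv_settled inv_C') => //.
by rewrite (perm_uniq perm_C') rcons_uniq q_notin.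
Qed.

Lemma proc_state_mstar n i l : 0 < i -> diag_pos n i <= l ->
  (proc_state L l).2 (n, i) = mstar L n i.
Proof.
move=> i_gt0; elim: l => [|l IH] //; rewrite leq_eqVlt => /predU1P [<- // | lt_l].
rewrite proc_stateS /= ifN_eq ?IH //; apply/eqP => ni_l.
have : diag_pos n i = l.+1 by apply: diag_pair_inj; rewrite ?diag_pairK.
lia.
Qed.

End Procedure.

Section Algorithm.

Context {U : countType} (L : nat -> U -> Prop).

Lemma not_finU_inter_idx_nil : (forall s : seq U, exists u, u \notin s) ->
  ~ finU (inter_idx L [::]).
Proof. by move=> U_inf [s s_all]; have [u /negP] := U_inf s; apply; exact: s_all. Qed.

Lemma mem_foldl_I_step (S : seq U) s I b : b \in I -> b \in foldl (I_step L S) I s.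
Proof.
elim: s I => [|e s IH] I b_I //=; apply: IH.
by rewrite /I_step; case: asboolP => // _; rewrite mem_rcons in_cons b_I orbT.
Qed.

Lemma foldl_I_step_take (S : seq U) C r :
  r <= size C -> ~ finU (inter_idx L [::]) ->
  exists D, [/\ foldl (I_step L S) [::] (take r C) = [seq (entry C k).2 | k <- D],
    all (fun k => 0 < k <= r) D,
    {in D, forall k, acontained S (L (entry C k).2) (entry C k).1} &
    ~ finU (inter_idx L (foldl (I_step L S) [::] (take r C)))].
Proof.
move=> + inter_nil; elim: r => [|r IH] r_le; first by exists [::]; rewrite take0.
have [D [I_D D_range D_acont I_inf]] := IH (ltnW r_le).
rewrite (take_nth (0, 0) r_le) foldl_rcons I_D /I_step.
case: asboolP => [[acont_r inf_r] | _].
  exists (rcons D r.+1); rewrite map_rcons; split => //.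
  - apply/allP => k; rewrite mem_rcons in_cons.
    by case/predU1P => [-> // | /(allP D_range)]; lia.
  - by move=> k; rewrite mem_rcons in_cons => /predU1P [-> | /D_acont].
exists D; split => //; last by rewrite -I_D.
by apply/allP => k /(allP D_range); lia.
Qed.

(* Were the language at position k not selected, S and the positions selected
   before k would witness a check of size |S| at k. *)
Lemma mem_foldl_I_step_settled (S : seq U) ms C k :
  ~ finU (inter_idx L [::]) -> 0 < k <= size C -> settled L ms C k -> uniq S ->
  acontained S (L (entry C k).2) (entry C k).1 -> ms (entry C k) < size S ->
  (entry C k).2 \in foldl (I_step L S) [::] C.
Proof.
move=> inter_nil k_range settled_k S_uniq S_acont lt_ms_S.
have k1_lt : k.-1 < size C by lia.
have [D [I_D D_range D_acont I_inf]] := foldl_I_step_take S (ltnW k1_lt) inter_nil.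
have take_k : take k C = rcons (take k.-1 C) (entry C k).
  by rewrite -take_nth // prednK //; lia.
rewrite -[C in foldl _ _ C](cat_take_drop k) foldl_cat.
apply: mem_foldl_I_step; rewrite take_k foldl_rcons.
rewrite /I_step asboolT /= ?mem_rcons ?mem_head //; split => // I_fin.
suff /settled_k : chk_size L C k (size S) by lia.
exists (rcons D k); split.
- apply/allP => d; rewrite mem_rcons in_cons.
  by case/predU1P => [-> // | /(allP D_range)]; lia.
- by rewrite mem_rcons mem_head.
- apply: finU_sub I_fin _ => y y_inter b; rewrite mem_rcons in_cons I_D.
  case/predU1P => [-> | /mapP [d d_D ->]]; apply: y_inter.
    by rewrite mem_rcons mem_head.
  by rewrite mem_rcons in_cons d_D orbT.
- exists S; split => // d; rewrite mem_rcons in_cons => /predU1P [-> // | /D_acont //].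
Qed.

Lemma alg_output_mem f x t b z : b \in I_t L f x t -> alg_output L f x t z ->
  L b z /\ z \notin S_t x t.
Proof.
rewrite /alg_output; case: (I_t L f x t) => // c I b_I [z_I z_S].
by split => //; apply: z_I.
Qed.

End Algorithm.

Lemma size_S_t (U : countType) (x : nat -> U) t : size (S_t x t) <= t.
Proof. by rewrite (leq_trans (size_undup _)) // size_map size_iota. Qed.

Lemma enumeration_acontained (U : countType) (A : U -> Prop) n x t :
  enumeration A n x -> acontained (S_t x t) A n.
Proof.
by move=> [_ noise]; rewrite /acontained (leq_trans (count_undup _ _)) // count_map.
Qed.

Theorem mainTheorem6 (U : countType)
    (U_infinite : forall s : seq U, exists u, u \notin s)
    (L : nat -> U -> Prop)
    (L_infinite : forall i, 0 < i -> ~ finU (L i))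
    (f : nat -> nat)
    (f_mono : forall a b, a <= b -> f a <= f b)
    (f_lim : forall M, exists t, M <= f t) :
  forall (n i : nat), 0 < i ->
  forall x : nat -> U, enumeration (L i) n x ->
  forall g : nat, diag_pos n i <= f g -> (forall j, j < g -> f j < diag_pos n i) ->
  forall t : nat, 0 < t ->
  maxn g (mstar L n i).+1 <= size (S_t x t) ->
  forall z : U, alg_output L f x t z ->
  L i z /\ z \notin S_t x t.
Proof.
move=> n i i_gt0 x x_enum g pos_le_fg _ t _ tstar_le z z_out.
set S := S_t x t in tstar_le z_out *.
have [g_le_S mstar_lt_S] : g <= size S /\ mstar L n i < size S.
  by move: tstar_le; rewrite geq_max => /andP [].
have pos_le_ft : diag_pos n i <= f t.
  exact: leq_trans pos_le_fg (f_mono _ _ (leq_trans g_le_S (size_S_t x t))).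
have [perm_C settled_C] := proc_state_spec L (f t).
set C := (proc_state L (f t)).1 in perm_C settled_C.
have ni_C : (n, i) \in C.
  rewrite (perm_mem perm_C) -(diag_pairK n i_gt0) map_f // mem_iota.
  by rewrite ltn0Sn /= add1n ltnS.
set k := (index (n, i) C).+1.
have C_k : entry C k = (n, i) by rewrite /entry nth_index.
have k_range : 0 < k <= size C by rewrite ltn0Sn /= index_mem.
apply: (alg_output_mem _ z_out); rewrite /I_t -/S -/C.
have -> : i = (entry C k).2 by rewrite C_k.
apply: (mem_foldl_I_step_settled (not_finU_inter_idx_nil (L := L) U_infinite) k_range
          (settled_C k k_range) (undup_uniq _)); rewrite C_k.
  exact: enumeration_acontained.
by rewrite proc_state_mstar.
Qed.
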